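(* Let $(M,(I,O))$ be a left-connected oriented map and $A=(H,\tau,\alpha)=\Lambda_1(M,(I,O))$. Then $A$ is a plane tree, and $(I,O)$ is the root-to-leaves orientation of $A$ (every non-root vertex of $A$ is incident to exactly one half-edge of $I$).
   Context: Permutations compose right to left. A map is $M=(H,\sigma,\alpha)$, $H$ finite, $\alpha$ a fixed-point-free involution, $\sigma$ a permutation, $\langle\sigma,\alpha\rangle$ transitive, root $r\in H$; vertices, edges, faces are cycles of $\sigma,\alpha,\phi=\sigma\alpha$; genus via $v-e+f=2-2g$; a plane tree is a map with one face and genus $0$. For a permutation $\pi$ and a subset $S$, $\pi_{|S}$ is obtained from the cycles of $\pi$ by erasing elements not in $S$. An orientation is a partition $H=I\uplus O$ with $\alpha(I)=O$. A left-path is a sequence $h_1,\dots,h_k\in I$ such that with $h_0=r$, for each $j$ there is $q_j>0$ with $h_{j-1}=\sigma^{q_j}(\alpha(h_j))$ and $\sigma^p(\alpha(h_j))\in O$ for $0\le p<q_j$; $(M,(I,O))$ is left-connected if every element of $I$ ends some left-path. Unfolding: take new elements $i,o\notin H$, $H'=H\cup\{i,o\}$, $I'=I\cup\{i\}$, $O'=O\cup\{o\}$, $\alpha'$ extending $\alpha$ with $\alpha'(i)=o$. $\sigma'$ is obtained from $\sigma$ by inserting $i$ just before $r$ in its cycle ($\sigma'(\sigma^{-1}(r))=i$, $\sigma'(i)=r$) and $\sigma'(o)=o$. $\pi_\circ=\sigma'_{|I'}$ regarded as a permutation of $H'$ fixing $O'$; $\tau'=\sigma'\pi_\circ^{-1}$;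 $\tau=\tau'_{|H}$. Then $\Lambda_1(M,(I,O))=(H,\tau,\alpha)$ with root $\tau'(i)$. *)

From mathcomp Require Import all_boot all_order all_algebra perm.
Set Implicit Arguments. Unset Strict Implicit. Unset Printing Implicit Defensive.
Import GRing.Theory.

(* Maps are given by permutations (here: functions, asserted bijective where
   needed) on a finite set H of half-edges.  Composition is right to left:
   phi = sigma alpha  means  phi x = sigma (alpha x). *)

Section Maps.
Variable H : finType.

Definition transitive_pair (s a : H -> H) : Prop :=
  forall x y, connect (fun u v => (v == s u) || (v == a u)) x y.

Definition is_map (s a : H -> H) : Prop :=
  [/\ injective s, involutive a, (forall x, a x != x) & transitive_pair s a].

Definition ncycles (f : H -> H) : nat := fcard f H.

Definition nvertices (s a : H -> H) := ncycles s.
Definition nedges (s a : H -> H) := ncycles a.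
Definition nfaces (s a : H -> H) := ncycles (s \o a).

(* v - e + f, so that v - e + f = 2 - 2g *)
Definition euler_char (s a : H -> H) : int :=
  (Posz (nvertices s a) - Posz (nedges s a) + Posz (nfaces s a))%R.

Definition plane_tree (s a : H -> H) : Prop :=
  [/\ is_map s a, nfaces s a = 1%N & euler_char s a = Posz 2].

(* orientation H = I (+) O with O = ~: I and alpha(I) = O *)
Definition orientation (a : H -> H) (I : {set H}) : Prop :=
  a @: I = ~: I.

(* one step of a left-path: h_{j-1} = prev, h_j = h *)
Definition left_step (s a : H -> H) (I : {set H}) (prev h : H) : Prop :=
  h \in I /\
  exists q, [/\ (0 < q)%N, prev = iter q s (a h) &
                forall p, (p < q)%N -> iter p s (a h) \in ~: I].

(* h_1 .. h_k is a left-path starting from h_0 = prev *)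
Fixpoint left_path (s a : H -> H) (I : {set H}) (prev : H) (l : seq H) : Prop :=
  match l with
  | [::] => True
  | h :: l' => left_step s a I prev h /\ left_path s a I h l'
  end.

Definition left_connected (s a : H -> H) (I : {set H}) (r : H) : Prop :=
  forall h, h \in I ->
    exists l : seq H, [/\ l != [::], left_path s a I r l & last r l = h].

End Maps.

(* restriction pi_{|S}: for x in S, the first element of S after x on the
   cycle of pi through x; the identity outside S *)
Definition restr (T : finType) (p : T -> T) (S : {set T}) (x : T) : T :=
  if x \in S then
    nth x [seq y <- [seq iter k.+1 p x | k <- iota 0 #|T|] | y \in S] 0
  else x.

(* Unfolding.  H' = H + bool, with i = inr true and o = inr false. *)
Section Unfold.
Variables (H : finType) (s a : H -> H) (I : {set H}) (r : H).

Definition HH := (H + bool)%type.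
Definition ih : HH := inr true.
Definition oh : HH := inr false.

Definition sigma' (z : HH) : HH :=
  match z with
  | inl h => if s h == r then ih else inl (s h)
  | inr true => inl r
  | inr false => oh
  end.

Definition I' : {set HH} :=
  [set z : HH | match z with inl h => h \in I | inr b => b end].

Definition Hset : {set HH} := [set z : HH | if z is inl _ then true else false].

Definition pi_circ : HH -> HH := restr sigma' I'.

Definition tau' (z : HH) : HH := sigma' (finv pi_circ z).

Definition tau (h : H) : H :=
  match restr tau' Hset (inl h) with inl y => y | inr _ => h end.

(* root of Lambda_1: tau'(i)  (it lies in H; the fallback r is never used) *)
Definition unfold_root : H :=
  match tau' ih with inl y => y | inr _ => r end.

End Unfold.

From mathcomp Require Import all_boot all_order all_algebra perm.
Set Implicit Arguments. Unset Strict Implicit. Unset Printing Implicit Defensive.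
Import GRing.Theory.

(* Each cycle of [tau' = sigma' pi_circ^-1] contains exactly one element of
   I' = I + {i}, its owner: the first element of I' met when iterating sigma'.
   Hence tau has |I| + 1 vertices (the root vertex is the one owned by i),
   each non-root vertex contains exactly one element of I, and alpha has |I|
   edges since the orientation picks one half-edge in each edge.  The parent
   of g in I is the owner of [alpha g]; left-connectedness says that iterating
   parent leads every g to i.  Induction from the leaves then shows that the
   face walk [tau alpha] entering the subtree of g at [alpha g] sweeps it and
   returns to the parent vertex, so [tau alpha] is a single cycle, and
   v - e + f = (|I| + 1) - |I| + 1 = 2. *)

Lemma nth_filter0 (A : eqType) (a : pred A) s k (d d' : A) :
  k < size s -> a (nth d s k) -> (forall j, j < k -> ~~ a (nth d s j)) ->
  nth d' (filter a s) 0 = nth d s k.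
Proof.
elim: s k => [|x s IH] [|k] //=; first by move=> _ ->.
move=> lt_k ak before_k; rewrite (negbTE (before_k 0 (ltn0Sn _))).
by apply: IH => // j jk; apply: (before_k j.+1).
Qed.

Lemma iter_inj (T : Type) (f : T -> T) n : injective f -> injective (iter n f).
Proof. by move=> f_inj; elim: n => //= n IH x y /f_inj /IH. Qed.

Lemma fconnect_iterS (T : finType) (f : T -> T) x y :
  injective f -> fconnect f x y -> exists m, y = iter m.+1 f x.
Proof.
move=> f_inj /iter_findex <-; case: findex => [|n]; last by exists n.
by exists (order f x).-1; rewrite orderSpred iter_order.
Qed.

Section FirstHit.
Variable T : finType.
Implicit Types (p : T -> T) (S : {set T}).

Definition first_hit p S z k :=
  iter k p z \in S /\ forall j, j < k -> iter j p z \notin S.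

Definition first_in p S (d z : T) :=
  nth d [seq y <- [seq iter k p z | k <- iota 0 #|T|] | y \in S] 0.

Lemma first_hit_ltn_card p S z k : injective p -> first_hit p S z k -> k < #|T|.
Proof.
move=> p_inj [kS before_k]; apply: leq_trans (max_card (fconnect p z)).
rewrite ltnNge; apply/negP => le_ord.
have: iter (k - order p z) p z \in S.
  by rewrite -{2}(iter_order p_inj z) -iterD subnK.
apply/negP/before_k.
by rewrite ltn_subrL order_gt0 (leq_trans (order_gt0 p z) le_ord).
Qed.

Lemma first_inE p S d z k :
  injective p -> first_hit p S z k -> first_in p S d z = iter k p z.
Proof.
move=> p_inj hit; have lt_k := first_hit_ltn_card p_inj hit; case: hit => kS before_k.
rewrite /first_in (nth_filter0 (k := k) (d := d)) ?size_map ?size_iota //;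
  rewrite ?(nth_map 0) ?size_iota ?nth_iota //.
by move=> j jk; rewrite (nth_map 0) ?size_iota ?nth_iota ?(ltn_trans jk) //; apply: before_k.
Qed.

Lemma exists_first_hit p S z : (exists k, iter k p z \in S) -> exists k, first_hit p S z k.
Proof.
move=> ex; case: (ex_minnP ex) => m mS m_min; exists m; split=> // j jm.
by apply/negP => /m_min; rewrite leqNgt jm.
Qed.

Lemma restr_first p S x : x \in S -> restr p S x = first_in p S x (p x).
Proof.
move=> xS; rewrite /restr xS /first_in; congr (nth _ (filter _ _) _).
by apply: eq_map => k; rewrite iterSr.
Qed.

Lemma restr_notin p S x : x \notin S -> restr p S x = x.
Proof. by rewrite /restr => /negbTE ->. Qed.

Lemma restr_first_hit p S x : injective p -> x \in S ->
  exists k, first_hit p S (p x) k /\ restr p S x = iter k p (p x).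
Proof.
move=> p_inj xS.
have [k hit] : exists k, first_hit p S (p x) k.
  apply: exists_first_hit; exists (order p x).-1.
  by rewrite -iterSr orderSpred iter_order.
by exists k; split => //; rewrite restr_first // (first_inE _ p_inj hit).
Qed.

Lemma restr_mem p S x : injective p -> x \in S -> restr p S x \in S.
Proof. by move=> p_inj xS; case: (restr_first_hit p_inj xS) => k [[kS _] ->]. Qed.

Lemma restr_inj p S : injective p -> injective (restr p S).
Proof.
move=> p_inj.
have le_case x y k l : x \in S -> restr p S x = restr p S y ->
    restr p S x = iter k p (p x) ->
    first_hit p S (p y) l -> restr p S y = iter l p (p y) -> k <= l -> x = y.
  move=> xS + ek [_ before_l] el kl.
  rewrite ek el -(subnKC kl) iterD => /(iter_inj p_inj).
  rewrite -iterSr iterS => /p_inj.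
  case E: (l - k) => [|m] //= ex; have /before_l : m < l by rewrite -ltnS -E ltnS leq_subr.
  by rewrite -iterSr /= -ex xS.
move=> x y e; case xS: (x \in S); case yS: (y \in S).
- have [k [hk ek]] := restr_first_hit p_inj xS; have [l [hl el]] := restr_first_hit p_inj yS.
  case: (leqP k l) => kl; first exact: (le_case x y k l).
  by symmetry; apply: (le_case y x l k) => //; apply: ltnW.
- by have := restr_mem p_inj xS; rewrite e restr_notin ?yS.
- by have := restr_mem p_inj yS; rewrite -e restr_notin ?xS.
- by move: e; rewrite !restr_notin ?xS ?yS.
Qed.

End FirstHit.

Lemma ncycles_eq_card (T : finType) (f : T -> T) (R : {set T}) :
  injective f ->
  (forall x, exists2 c, c \in R & fconnect f x c) ->
  {in R &, forall c1 c2, fconnect f c1 c2 -> c1 = c2} ->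
  ncycles f = #|R|.
Proof.
move=> f_inj cover sep; rewrite /ncycles.
have sym : connect_sym (frel f) by move=> x y; apply: fconnect_sym.
rewrite -(card_in_imset (f := froot f)); last first.
  by move=> c1 c2 c1R c2R /(fingraph.rootP sym); apply: sep.
rewrite /n_comp_mem; apply: eq_card => x; rewrite !inE.
apply/idP/imsetP.
- case/andP => /eqP root_x _; have [c cR xc] := cover x.
  by exists c => //; rewrite -root_x; apply/(fingraph.rootP sym).
- by case=> c cR ->; rewrite andbT roots_root.
Qed.

Lemma ncycles1 (T : finType) (f : T -> T) (c : T) :
  injective f -> (forall x, fconnect f x c) -> ncycles f = 1%N.
Proof.
move=> f_inj conn; rewrite -(cards1 c); apply: ncycles_eq_card => //.
  by move=> x; exists c; rewrite ?inE.
by move=> c1 c2; rewrite !inE => /eqP -> /eqP ->.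
Qed.

Section Orientation.
Variables (T : finType) (a : T -> T) (I : {set T}).
Hypotheses (a_inv : involutive a) (orient : orientation a I).

Lemma orientation_notin h : h \in I -> a h \notin I.
Proof.
move=> hI; have : a h \in a @: I by apply: imset_f.
by rewrite orient inE.
Qed.

Lemma orientation_in x : x \notin I -> a x \in I.
Proof.
move=> xI; have : x \in ~: I by rewrite inE.
by rewrite -orient => /imsetP [h hI ->]; rewrite a_inv.
Qed.

Lemma iter_involutive n x : iter n a x = x \/ iter n a x = a x.
Proof. by elim: n => [|n [IH|IH]] /=; [left | right; rewrite IH | left; rewrite IH a_inv]. Qed.

Lemma ncycles_orientation : ncycles a = #|I|.
Proof.
apply: ncycles_eq_card; first exact: inv_inj.
- move=> x; case xI: (x \in I); first by exists x.
  by exists (a x); [apply: orientation_in; rewrite xI | apply: fconnect1].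
- move=> c1 c2 c1I c2I /iter_findex.
  case: (iter_involutive (findex a c1 c2) c1) => -> // ac1.
  by move: c2I; rewrite -ac1 (negbTE (orientation_notin c1I)).
Qed.

End Orientation.

Lemma transitive_pair_faces (T : finType) (s a : T -> T) :
  (forall x y, fconnect (s \o a) x y) -> transitive_pair s a.
Proof.
move=> conn x y; apply: connect_sub (conn x y) => u _ /eqP <-.
by apply: (@connect_trans _ _ (a u)); apply: connect1; rewrite eqxx ?orbT.
Qed.

Section SinkInduction.
Variables (T : finType) (f : T -> T) (z : T) (P : pred T).
Hypotheses (fz : f z = z) (reach : {in P, forall x, exists n, iter n f x = z}).

Lemma iter_sink_addn n m x : iter n f x = z -> iter (m + n) f x = z.
Proof. by rewrite iterD => ->; rewrite iter_fix. Qed.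

Lemma iter_sink_uniform : exists M, {in P, forall x, iter M f x = z}.
Proof.
suff [M hM] : exists M, forall x, x \in enum P -> P x -> iter M f x = z.
  by exists M => x Px; apply: hM; rewrite ?mem_enum.
elim: (enum P) => [|y s [M hM]]; first by exists 0.
case Py: (P y); last first.
  by exists M => x; rewrite inE => /orP [/eqP ->|]; [rewrite Py | apply: hM].
have [n hn] := reach Py; exists (M + n) => x; rewrite inE => /orP [/eqP -> _|xs Px].
  exact: iter_sink_addn.
by rewrite addnC; apply/iter_sink_addn/hM.
Qed.

Lemma sink_tree_ind (Q : T -> Prop) : ~~ P z ->
  (forall x, P x -> (forall c, P c -> f c = x -> Q c) -> Q x) ->
  forall x, P x -> Q x.
Proof.
move=> Pz step; have [M hM] := iter_sink_uniform.
(* [k] bounds the height [M - m] of the part of the tree above [x]. *)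
suff deep k x m : P x -> M <= k + m -> iter m f x != z -> Q x.
  by move=> x Px; apply: (deep M x 0); rewrite ?addn0 //=; apply: contraNneq Pz => <-.
elim: k x m => [|k IH] x m Px le_M ne_z.
  by move: ne_z; rewrite add0n in le_M; rewrite -(subnK le_M) iter_sink_addn ?hM ?eqxx.
apply: step => // c Pc fc; apply: (IH c m.+1) => //; first by rewrite addnS.
by rewrite iterSr fc.
Qed.

End SinkInduction.

Section Unfolding.
Variables (H : finType) (sigma : {perm H}) (r : H) (I : {set H}).

Local Notation sg := (sigma' sigma r).
Local Notation Ip := (I' I).
Local Notation pic := (pi_circ sigma I r).
Local Notation tp := (tau' sigma I r).
Local Notation tu := (tau sigma I r).
Local Notation iH := (@ih H).
Local Notation oH := (@oh H).
Local Notation inH x := (@inl H bool x : HH H).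

Lemma inl_I' x : (inH x \in Ip) = (x \in I).
Proof. by rewrite inE. Qed.

Lemma ih_I' : iH \in Ip.
Proof. by rewrite inE. Qed.

Lemma oh_I' : oH \notin Ip.
Proof. by rewrite inE. Qed.

Lemma sigma'_inl x : sg (inH x) = if sigma x == r then iH else inH (sigma x).
Proof. by []. Qed.

Lemma sigma'_inj : injective sg.
Proof.
move=> [x|[]] [y|[]] //=; rewrite ?sigma'_inl /ih /oh;
  do ?[case: ifP => // /eqP]; try congruence.
- by move=> sx sy _; congr inl; apply: (perm_inj (s := sigma)); rewrite sx sy.
- by move=> _ _ [] /perm_inj ->.
Qed.

Lemma sigma'_eq_oh z : sg z = oH -> z = oH.
Proof. by case: z => [x|[]] //=; case: ifP. Qed.

Lemma iter_sigma'_inl_neq_oh x j : iter j sg (inH x) != oH.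
Proof. by elim: j => [|j IH] //=; apply: contra_neq IH => /sigma'_eq_oh. Qed.

Lemma pi_circ_inj : injective pic.
Proof. exact: restr_inj sigma'_inj. Qed.

Lemma tau'_inj : injective tp.
Proof. by move=> x y /sigma'_inj; apply: (finv_inj pi_circ_inj). Qed.

Lemma tau'_notin z : z \notin Ip -> tp z = sg z.
Proof.
move=> zI; rewrite /tau'; congr sg.
have pz : pic z = z by rewrite /pi_circ restr_notin.
by rewrite -{1}pz (finv_f pi_circ_inj).
Qed.

Lemma tau'_oh : tp oH = oH.
Proof. by rewrite tau'_notin ?oh_I'. Qed.

(* [tau' = sigma' pi_circ^-1] undoes, on I', the jump of pi_circ: iterating
   sigma' from [tau' z] first meets I' at z itself. *)
Lemma tau'_first_hit z : z \in Ip -> exists k, first_hit sg Ip (tp z) k /\ iter k sg (tp z) = z.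
Proof.
move=> zI; set w := finv pic z.
have pw : pic w = z by rewrite /w (f_finv pi_circ_inj).
have wI : w \in Ip.
  by apply: contraTT zI => wI; rewrite -pw /pi_circ restr_notin.
have [k [hit ek]] := restr_first_hit sigma'_inj wI.
by exists k; rewrite /tau' -/w -ek.
Qed.

(* The default [oh] is returned only when the sigma'-orbit of [z] misses I'. *)
Definition owner' (z : HH H) : HH H := first_in sg Ip oH z.
Definition reaches_I' (z : HH H) := exists k, iter k sg z \in Ip.

Lemma owner'E z k : first_hit sg Ip z k -> owner' z = iter k sg z.
Proof. exact: first_inE sigma'_inj. Qed.

Lemma owner'_I' z : reaches_I' z -> owner' z \in Ip.
Proof. by case/exists_first_hit => k hit; rewrite (owner'E hit); case: hit. Qed.

Lemma owner'_id z : z \in Ip -> owner' z = z.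
Proof. by move=> zI; rewrite (@owner'E z 0). Qed.

Lemma owner'_tau' z : reaches_I' z -> reaches_I' (tp z) /\ owner' (tp z) = owner' z.
Proof.
move=> reach_z; case zI: (z \in Ip).
  have [k [hit ek]] := tau'_first_hit zI.
  by split; [exists k; rewrite ek | rewrite (owner'E hit) ek owner'_id].
have [[|k] [kI before_k]] := exists_first_hit reach_z; first by rewrite /= zI in kI.
have hit : first_hit sg Ip (sg z) k.
  by split=> [|j jk]; rewrite -iterSr //; apply: before_k.
rewrite tau'_notin ?zI //; split; first by exists k; case: hit.
by rewrite (owner'E hit) (@owner'E z k.+1) ?iterSr.
Qed.

(* [tau] skips the new half-edge [i] when it meets it. *)
Lemma tau_cases h :
  tp (inH h) = inH (tu h) \/ (tp (inH h) = iH /\ tp iH = inH (tu h)).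
Proof.
rewrite /tau restr_first ?inE //.
case E: (tp (inH h)) => [y|[]].
- left; rewrite (@first_inE _ _ _ _ _ 0 tau'_inj) //= ?E //.
  by split; rewrite /= ?E ?inE.
- case E2: (tp iH) => [y|[]].
  + right; split => //.
    rewrite (@first_inE _ _ _ _ _ 1 tau'_inj) //= ?E ?E2 //.
    by split=> [|[|j] //]; rewrite /= ?E2 inE.
  + by have := E; rewrite -E2 => /tau'_inj.
  + by move: (tau'_inj (etrans E2 (esym tau'_oh))).
- by move: (tau'_inj (etrans E (esym tau'_oh))).
Qed.

Lemma tau_inj : injective tu.
Proof.
move=> x y e.
have [ex|[ix ex]] := tau_cases x; have [ey|[iy ey]] := tau_cases y.
- by have [] : inH x = inH y by apply: tau'_inj; rewrite ex ey e.
- by have : inH x = iH by apply: tau'_inj; rewrite ex ey e.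
- by have : inH y = iH by apply: tau'_inj; rewrite ey ex e.
- by have [] : inH x = inH y by apply: tau'_inj; rewrite ix iy.
Qed.

Definition owner (x : H) : HH H := owner' (inH x).

Section Owner.
Hypothesis reaches_inl : forall x, reaches_I' (inH x).

Lemma owner_tau x : owner (tu x) = owner x.
Proof.
rewrite /owner; have [<-|[ex <-]] := tau_cases x; first by case: (owner'_tau' (reaches_inl x)).
have [reach_i owner_i] := owner'_tau' (reaches_inl x); rewrite ex in reach_i owner_i.
by rewrite -owner_i; case: (owner'_tau' reach_i).
Qed.

Lemma owner_iter n x : owner (iter n tu x) = owner x.
Proof. by elim: n => //= n <-; rewrite owner_tau. Qed.

Lemma owner_fconnect x y : fconnect tu x y -> owner x = owner y.
Proof. by move/iter_findex <-; rewrite owner_iter. Qed.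

Lemma owner_id x : x \in I -> owner x = inH x.
Proof. by move=> xI; rewrite /owner owner'_id ?inl_I'. Qed.

Lemma owner_I' x : owner x \in Ip.
Proof. exact: owner'_I'. Qed.

(* Before reaching I', the sigma'-walk from [x] stays in H \ I, where tau' and
   hence tau agree with sigma'. *)
Lemma iter_sigma'_tau x j v : (forall i, i < j -> iter i sg (inH x) \notin Ip) ->
  iter j sg (inH x) = inH v -> v = iter j tu x.
Proof.
elim: j v => [|j IH] v before_j /=; first by case.
case E: (iter j sg (inH x)) => [u|[]].
- have uI : inH u \notin Ip by rewrite -E; apply: before_j.
  rewrite -(tau'_notin uI) => ev.
  rewrite -(IH u (fun i ii => before_j i (ltnW ii)) E).
  by have [|[]] := tau_cases u; rewrite ev // => -[].
- by have := before_j j (ltnSn j); rewrite E ih_I'.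
- by have := iter_sigma'_inl_neq_oh x j; rewrite E.
Qed.

Lemma fconnect_owner x g : owner x = inH g -> fconnect tu x g.
Proof.
have [k hit] := exists_first_hit (reaches_inl x); rewrite /owner (owner'E hit) => e.
by rewrite (iter_sigma'_tau hit.2 e); apply: fconnect_iter.
Qed.

Lemma owner_ih x :
  owner x = iH -> exists u, [/\ sigma u = r, u \notin I & fconnect tu x u].
Proof.
have [[|k] [kI before_k]] := exists_first_hit (reaches_inl x).
  by rewrite /owner (@owner'E _ 0).
rewrite /owner (@owner'E _ k.+1) //= => e.
case E: (iter k sg (inH x)) e => [u|[]] e.
- have uI : inH u \notin Ip by rewrite -E; apply: before_k.
  exists u; split; last 2 first.
  + by rewrite -inl_I'.
  + by rewrite (iter_sigma'_tau (fun i ii => before_k i (ltnW ii)) E); apply: fconnect_iter.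
  by move: e; rewrite sigma'_inl; case: ifP => // /eqP.
- by have := before_k k (ltnSn k); rewrite E ih_I'.
- by have := iter_sigma'_inl_neq_oh x k; rewrite E.
Qed.

Lemma owner_eq_fconnect x y : owner x = owner y -> fconnect tu x y.
Proof.
move=> exy; have := owner_I' x; case E: (owner x) => [g|[]] _.
- apply: connect_trans (fconnect_owner E) _.
  by rewrite fconnect_sym; [apply: fconnect_owner; rewrite -exy | exact: tau_inj].
- have [u1 [s1 _ c1]] := owner_ih E.
  have [u2 [s2 _ c2]] := owner_ih (etrans (esym exy) E).
  have u12 : u1 = u2 by apply: (perm_inj (s := sigma)); rewrite s1 s2.
  by apply: connect_trans c1 _; rewrite u12 fconnect_sym //; apply: tau_inj.
- by have := owner_I' x; rewrite E inE.
Qed.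

Section Faces.
Variable alpha : {perm H}.
Hypotheses (alpha_inv : involutive alpha) (orient : orientation alpha I).

Local Notation ph := (tu \o alpha).

Definition parent (z : HH H) : HH H := if z is inl h then owner (alpha h) else z.

(* The contour of the subtree hanging from [g]: the face walk entering it
   through [alpha g] visits every half-edge of the vertex of [g] and leaves
   through the next half-edge [tau (alpha g)] of the parent vertex. *)
Definition contour g := fconnect ph (alpha g) (tu (alpha g)) /\
  forall x, owner x = inH g -> fconnect ph (alpha g) x.

Lemma contour_children g : g \in I ->
  (forall c, c \in I -> parent (inH c) = inH g -> contour c) -> contour g.
Proof.
move=> gI contour_c.
have first : fconnect ph (alpha g) (tu g).
  by rewrite -{2}[g]alpha_inv; apply: fconnect1.
have around k : fconnect ph (alpha g) (iter k.+1 tu g).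
  elim: k => [//|k IH].
  set y := iter k.+1 tu g in IH *.
  have oy : owner y = inH g by rewrite /y owner_iter owner_id.
  have [yg|yng] := eqVneq y g; first by rewrite iterS -/y yg.
  have yI : y \notin I by apply: contra yng => yI; move: oy; rewrite owner_id // => -[->].
  have [back _] : contour (alpha y).
    by apply: contour_c; [exact: orientation_in | rewrite /= alpha_inv].
  by rewrite alpha_inv in back; apply: connect_trans IH back.
have vertex x : owner x = inH g -> fconnect ph (alpha g) x.
  move=> ox; have := owner_eq_fconnect (etrans (owner_id gI) (esym ox)).
  by case/(fconnect_iterS tau_inj) => m ->.
split => //; apply: connect_trans (vertex g (owner_id gI)) _; exact: fconnect1.
Qed.

Hypothesis depth_finite : forall g, g \in I -> exists n, iter n parent (inH g) = iH.

Lemma contour_all g : g \in I -> contour g.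
Proof.
pose P := [pred z : HH H | if z is inl h then h \in I else false].
have reach : {in P, forall z, exists n, iter n parent z = iH} by case=> // h; apply: depth_finite.
move=> gI; apply: (@sink_tree_ind _ parent iH P erefl reach
  (fun z => if z is inl h then contour h else True) isT _ (inH g) gI).
move=> [h|//] hI children; apply: contour_children => // c cI pc.
exact: (children (inH c)).
Qed.

Variable c0 : H.
Hypothesis owner_c0 : owner c0 = iH.

Lemma fconnect_face_iter k : fconnect ph c0 (iter k tu c0).
Proof.
elim: k => [|k IH] //=.
set y := iter k tu c0 in IH *.
have oy : owner y = iH by rewrite /y owner_iter.
have yI : y \notin I by apply/negP => yI; move: oy; rewrite owner_id.
have [back _] := contour_all (orientation_in alpha_inv orient yI).
by rewrite alpha_inv in back; apply: connect_trans IH back.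
Qed.

Lemma fconnect_face_root x : owner x = iH -> fconnect ph c0 x.
Proof.
move=> ox; move: (owner_eq_fconnect (etrans owner_c0 (esym ox))) => /iter_findex <-.
exact: fconnect_face_iter.
Qed.

Lemma fconnect_face x : fconnect ph c0 x.
Proof.
suff down m g : g \in I -> iter m parent (inH g) = iH ->
    forall x, owner x = inH g -> fconnect ph c0 x.
  have := owner_I' x; case E: (owner x) => [g|[]] //.
  - by rewrite inl_I' => gI; have [n hn] := depth_finite gI; apply: (down n g).
  - by move=> _; apply: fconnect_face_root.
  - by rewrite inE.
elim: m g => [|m IH] g gI; first by [].
rewrite iterSr /=.
have reach_ag : iter m parent (owner (alpha g)) = iH -> fconnect ph c0 (alpha g).
  have := owner_I' (alpha g); case E: (owner (alpha g)) => [g'|[]] //=.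
  - by rewrite inl_I' => g'I e; apply: (IH g' g'I e).
  - by move=> _ _; apply: fconnect_face_root.
  - by rewrite inE.
move=> /reach_ag ag y oy.
exact: connect_trans ag ((contour_all gI).2 y oy).
Qed.

End Faces.
End Owner.

Lemma owner'_sigma' z : z \notin Ip -> reaches_I' (sg z) ->
  reaches_I' z /\ owner' z = owner' (sg z).
Proof.
move=> zI /exists_first_hit [k [kI before_k]].
have hit : first_hit sg Ip z k.+1.
  split=> [|[_ //|j jk]]; rewrite iterSr //; exact: before_k.
split; first by exists k.+1; case: hit.
by rewrite (owner'E hit) (owner'E (conj kI before_k)) iterSr.
Qed.

Lemma owner_sigma_walk q y :
  (forall p, p <= q -> iter p sigma y \notin I) ->
  iter q.+1 sigma y \in I \/ iter q.+1 sigma y = r ->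
  reaches_I' (inH y) /\
  (owner y = iH \/ owner y = inH (iter q.+1 sigma y) /\ iter q.+1 sigma y != r).
Proof.
have sigma'_r u : sigma u = r -> sg (inH u) = iH.
  by rewrite sigma'_inl => ->; rewrite eqxx.
have sigma'_nr u : sigma u != r -> sg (inH u) = inH (sigma u).
  by rewrite sigma'_inl => /negbTE ->.
elim: q y => [|q IH] y notI last_q; have yI : inH y \notin Ip by rewrite inl_I' (notI 0).
all: have [sr|snr] := eqVneq (sigma y) r.
1,3: have := owner'_sigma' yI; rewrite sigma'_r // (owner'_id ih_I').
1,2: by case=> [|reach own]; [exists 0; rewrite ih_I' | split=> //; left].
- have sI : sigma y \in I by case: last_q => [//|/eqP]; rewrite (negbTE snr).
  have := owner'_sigma' yI; rewrite sigma'_nr // (@owner'_id (inH (sigma y))) ?inl_I' //.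
  by case=> [|reach own]; [exists 0; rewrite inl_I' | split=> //; right].
- have notI' p : p <= q -> iter p sigma (sigma y) \notin I.
    by move=> pq; rewrite -iterSr notI.
  have last' : iter q.+1 sigma (sigma y) \in I \/ iter q.+1 sigma (sigma y) = r.
    by rewrite -iterSr.
  have [reach_s own_s] := IH _ notI' last'.
  have := owner'_sigma' yI; rewrite sigma'_nr // => /(_ reach_s) [reach own].
  by split=> //; rewrite /owner own [iter q.+2 _ _]iterSr.
Qed.

Section LeftPaths.
Variable alpha : {perm H}.

Lemma left_step_owner prev h : left_step sigma alpha I prev h -> prev = r \/ prev \in I ->
  reaches_I' (inH (alpha h)) /\
  (owner (alpha h) = iH \/ owner (alpha h) = inH prev /\ prev != r).
Proof.
move=> [_ [[|q] [// _ -> notI]]] prev_ok.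
apply: owner_sigma_walk => [p pq|]; first by have := notI p pq; rewrite inE.
by case: prev_ok; [right | left].
Qed.

Lemma left_path_depth l prev : left_path sigma alpha I prev l ->
  prev = r \/ prev \in I /\ (exists n, iter n (parent alpha) (inH prev) = iH) ->
  forall h, h \in l ->
  reaches_I' (inH (alpha h)) /\ exists n, iter n (parent alpha) (inH h) = iH.
Proof.
elim: l prev => [|h l IH] prev //= [step path] prev_ok.
have [reach own] : reaches_I' (inH (alpha h)) /\
    (owner (alpha h) = iH \/ owner (alpha h) = inH prev /\ prev != r).
  by apply: left_step_owner step _; case: prev_ok => [|[]]; [left | right].
have depth_h : exists n, iter n (parent alpha) (inH h) = iH.
  case: own => [own|[own pnr]]; first by exists 1; rewrite /= /parent own.
  case: prev_ok => [pr|[_ [n hn]]]; first by rewrite pr eqxx in pnr.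
  by exists n.+1; rewrite iterSr /= /parent own.
move=> h'; rewrite inE => /orP [/eqP -> //|h'l].
by apply: (IH h) => //; right; split => //; case: step.
Qed.

End LeftPaths.
End Unfolding.

Section Lambda1.
Variables (H : finType) (sigma alpha : {perm H}) (r : H) (I : {set H}).
Hypotheses (map : is_map sigma alpha) (orient : orientation alpha I)
  (lc : left_connected sigma alpha I r).

Local Notation tu := (tau sigma I r).
Local Notation own := (owner sigma r I).
Local Notation iH := (@ih H).

Let alpha_inv : involutive alpha. Proof. by case: map. Qed.

Lemma left_connected_owner h : h \in I ->
  reaches_I' sigma r I (inl (alpha h)) /\
  exists n, iter n (parent sigma r I alpha) (inl h) = iH.
Proof.
move=> hI; have [l [+ path <-]] := lc hI; case: l path => // h1 l path _.
by apply: (left_path_depth path); [left | exact: (mem_last h1 l)].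
Qed.

Lemma left_connected_reaches x : reaches_I' sigma r I (inl x).
Proof.
case xI: (x \in I); first by exists 0; rewrite /= inE.
have := (left_connected_owner (orientation_in alpha_inv orient (negbT xI))).1.
by rewrite alpha_inv.
Qed.

Lemma exists_owner_ih : exists c0, own c0 = iH.
Proof.
have [h0 h0I] : exists h0, h0 \in I.
  case rI: (r \in I); first by exists r.
  by exists (alpha r); apply: (orientation_in alpha_inv orient); rewrite rI.
have [l [+ path _]] := lc h0I; case: l path => // h1 l [step _] _.
have [_ [own_h1|[_ /eqP //]]] := left_step_owner step (or_introl erefl).
by exists (alpha h1).
Qed.

Let reaches := left_connected_reaches.

Lemma owner_notin_I c : own c = iH -> c \notin I.
Proof. by move=> oc; apply/negP => cI; move: oc; rewrite owner_id. Qed.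

Lemma nvertices_tau : ncycles tu = #|I|.+1.
Proof.
have [c0 own_c0] := exists_owner_ih.
have -> : #|I|.+1 = #|c0 |: I| by rewrite cardsU1 owner_notin_I.
apply: ncycles_eq_card; first exact: tau_inj.
- move=> x; have := owner_I' reaches x; case E: (own x) => [g|[]] //.
  + by rewrite inl_I' => gI; exists g; [rewrite !inE gI orbT | apply: (fconnect_owner reaches) E].
  + by move=> _; exists c0; [rewrite !inE eqxx | apply: (owner_eq_fconnect reaches); rewrite E own_c0].
  + by rewrite inE.
- move=> c1 c2; rewrite !inE => /orP [/eqP ->|c1I] /orP [/eqP ->|c2I] //
    /(owner_fconnect reaches); rewrite ?own_c0 ?owner_id //.
  by case.
Qed.

Lemma tau_alpha_inj : injective (tu \o alpha).
Proof. exact: inj_comp (@tau_inj _ sigma r I) (@perm_inj _ alpha). Qed.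

Lemma face_connected x y : fconnect (tu \o alpha) x y.
Proof.
have [c0 own_c0] := exists_owner_ih.
have depth g : g \in I -> exists n, iter n (parent sigma r I alpha) (inl g) = iH.
  by move/left_connected_owner => [].
have face := fconnect_face reaches alpha_inv orient depth own_c0.
by apply: connect_trans (face y); rewrite fconnect_sym //; apply: tau_alpha_inj.
Qed.

Lemma nfaces_tau : ncycles (tu \o alpha) = 1%N.
Proof.
by apply: (ncycles1 (c := r)) tau_alpha_inj _ => x; apply: face_connected.
Qed.

Lemma is_map_tau : is_map tu alpha.
Proof.
split; [exact: tau_inj | exact: alpha_inv | by case: map |].
exact: transitive_pair_faces face_connected.
Qed.

Lemma plane_tree_tau : plane_tree tu alpha.
Proof.
split; [exact: is_map_tau | exact: nfaces_tau |].
rewrite /euler_char /nvertices /nedges /nfaces nvertices_tau nfaces_tau.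
rewrite (ncycles_orientation alpha_inv orient) -addn1 PoszD.
by rewrite -[(_ + 1 - _)%R]addrAC subrr add0r.
Qed.

Lemma owner_unfold_root : own (unfold_root sigma I r) = iH.
Proof.
have reach_i : reaches_I' sigma r I iH by exists 0; rewrite /= ih_I'.
rewrite /unfold_root; case E: (tau' sigma I r iH) => [y|[]].
- by rewrite /owner -E (owner'_tau' reach_i).2 owner'_id // ih_I'.
- have [c0 own_c0] := exists_owner_ih.
  have [u [su uI _]] := owner_ih reaches own_c0.
  have : tau' sigma I r (inl u) = iH by rewrite tau'_notin ?inl_I' // sigma'_inl su eqxx.
  by move=> e; have := tau'_inj (etrans e (esym E)).
- by move: E; rewrite -[inr false]/(oh H) -(tau'_oh sigma r I) => /tau'_inj.
Qed.

Lemma card_vertex_I x : ~~ fconnect tu (unfold_root sigma I r) x ->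
  #|[set y | fconnect tu x y & y \in I]| = 1%N.
Proof.
move=> not_root; have := owner_I' reaches x; case E: (own x) => [g|[]].
- rewrite inl_I' => gI; suff -> : [set y | fconnect tu x y & y \in I] = [set g].
    by rewrite cards1.
  apply/setP => y; rewrite !inE; apply/andP/eqP => [[/(owner_fconnect reaches)]|->].
    by rewrite E => + yI; rewrite owner_id // => -[].
  by split => //; apply: (fconnect_owner reaches) E.
- move=> _; case/negP: not_root; apply: (owner_eq_fconnect reaches).
  by rewrite E owner_unfold_root.
- by rewrite inE.
Qed.

End Lambda1.

Theorem mainTheorem11 (H : finType) (sigma alpha : {perm H}) (r : H)
    (I : {set H}) :
  is_map sigma alpha ->
  orientation alpha I ->
  left_connected sigma alpha I r ->
  plane_tree (tau sigma I r) alpha /\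
  (forall x : H,
      ~~ fconnect (tau sigma I r) (unfold_root sigma I r) x ->
      #|[set y | fconnect (tau sigma I r) x y & y \in I]| = 1%N).
Proof.
move=> map orient lc.
split; first exact: plane_tree_tau map orient lc.
exact: card_vertex_I map orient lc.
Qed.
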